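(* For every finite collection $\Gamma$ of pricing policies, the OJS problem admits a posted price mechanism whose regret with respect to $\Gamma$ on $T$-round instances is $O\!\left(T^{\frac12\left(1+\frac{CW}{CW+1}\right)}\sqrt{\log|\Gamma|}\right)$.
   Context: OJS problem: there are $N$ slots; slot $i\in[N]$ has bandwidth $c(i)$. $T$ jobs arrive in order $t=1,\dots,T$; job $t$ has arrival slot $a_t$, departure slot $d_t\ge a_t$, length $1\le l_t\le d_t-a_t+1$ and value $v_t\in[0,1)$, chosen by an adversary; jobs are reported at the beginning of their arrival slot in index order. $C\ge\max_ic(i)$ and $W\ge\max_t(d_t-a_t+1)$ are known and independent of $T$. Let $A_t=[a_t,a_t+W-1]$ and $\mathcal I_t=\{[i,i+l_t-1]:a_t\le i\le d_t-l_t+1\}$. For job $t$ the mechanism posts $\bm p_t\in(0,1]^{A_t}$ before learning $d_t,l_t,v_t$ (which are revealed afterwards); the job receives one bandwidth unit of each slot in $\hat A^{\bm p}_t=\emptyset$ if $v_t<\min_{I\in\mathcal I_t}\sum_{i\in I}\bm p(i)$ and otherwise $\hat A^{\bm p}_t=\arg\min_{I\in\mathcal I_t}\sum_{i\in I}\bm p(i)$ (lexicographic ties), paying $\hat q^{\bm p}_t=\sum_{i\in\hat A^{\bm p}_t}\bm p(i)$. Bandwidth vectors $\bm\lambda_t\in\{0,\dots,C\}^{A_t}$: $\bm\lambda_t(i)=c(i)$ if slot $i$ was not allocated to jobs $1,\dots,t-1$; $\bm\lambda_{t+1}(i)=\bm\lambda_t(i)-1$ if slot $i$ is allocated to job $t$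 and $i\in A_{t+1}$. Posted prices must be feasible: $\bm p_t(i)=1$ whenever $\bm\lambda_t(i)=0$. A pricing policy $\gamma$ maps bandwidth vectors to feasible price vectors; playing it repeatedly from the start gives prices $\bm p^\gamma_t$ and revenue $\sum_t\hat q^{\bm p^\gamma_t}_t$. Regret w.r.t. $\Gamma$: $\max_{\gamma\in\Gamma}\sum_t\hat q^{\bm p^\gamma_t}_t-\mathbb{E}[\sum_t\hat q^{\bm p_t}_t]$. *)

From Stdlib Require Import Reals Lra Arith List Sorted.
Import ListNotations.
Open Scope R_scope.

(** A job: arrival slot a, departure slot d, length l, value v. *)
Record job := Job { ja : nat; jd : nat; jl : nat; jv : R }.

Definition valid_job (N W : nat) (j : job) : Prop :=
  (1 <= ja j)%nat /\ (ja j <= jd j)%nat /\ (jd j <= N)%nat /\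
  (1 <= jl j)%nat /\ (jl j <= jd j - ja j + 1)%nat /\
  (jd j - ja j + 1 <= W)%nat /\
  0 <= jv j /\ jv j < 1.

Definition valid_instance (N W : nat) (js : list job) : Prop :=
  Forall (valid_job N W) js /\ Sorted (fun x y => (ja x <= ja y)%nat) js.

Fixpoint sumR (f : nat -> R) (n : nat) : R :=
  match n with O => 0 | S m => sumR f m + f m end.

(** Price vectors are indexed by the offset k in A_t, i.e. slot a_t + k. *)
Definition cost (p : nat -> R) (a l s : nat) : R :=
  sumR (fun k => p (s - a + k)%nat) l.

Fixpoint argmin_from (f : nat -> R) (best : nat) (l : list nat) : nat :=
  match l with
  | [] => best
  | x :: r => if Rlt_dec (f x) (f best) then argmin_from f x r
              else argmin_from f best r
  end.

(** Cheapest interval [s, s+l-1] with a <= s <= d-l+1, lexicographic ties. *)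
Definition best_start (p : nat -> R) (j : job) : nat :=
  argmin_from (cost p (ja j) (jl j)) (ja j)
              (seq (S (ja j)) (jd j - jl j + 1 - ja j)).

Definition allocate (rem : nat -> nat) (s l : nat) : nat -> nat :=
  fun i => if andb (Nat.leb s i) (Nat.ltb i (s + l)) then (rem i - 1)%nat
           else rem i.

Definition step (p : nat -> R) (j : job) (rem : nat -> nat) : R * (nat -> nat) :=
  let s := best_start p j in
  let q := cost p (ja j) (jl j) s in
  if Rlt_dec (jv j) q then (0, rem) else (q, allocate rem s (jl j)).

(** A (deterministic) online pricer: from the history of past jobs (fully
    revealed), the arrival slot of the current job and the current remaining
    bandwidth of every slot, it posts a price vector (indexed by offsets). *)
Definition pricer := list job -> nat -> (nat -> nat) -> (nat -> R).

Fixpoint revenue_aux (pr : pricer) (hist : list job) (rem : nat -> nat)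
    (js : list job) : R :=
  match js with
  | [] => 0
  | j :: r =>
      let p := pr hist (ja j) rem in
      fst (step p j rem) + revenue_aux pr (hist ++ [j]) (snd (step p j rem)) r
  end.

Definition cap (N : nat) (c : nat -> nat) : nat -> nat :=
  fun i => if andb (Nat.leb 1 i) (Nat.leb i N) then c i else O.

Definition revenue (N : nat) (c : nat -> nat) (pr : pricer) (js : list job) : R :=
  revenue_aux pr [] (cap N c) js.

Definition feasible_prices (W : nat) (rem : nat -> nat) (a : nat) (p : nat -> R)
  : Prop :=
  forall k, (k < W)%nat -> 0 < p k /\ p k <= 1 /\ (rem (a + k)%nat = O -> p k = 1).

Fixpoint feasible_run_aux (W : nat) (pr : pricer) (hist : list job)
    (rem : nat -> nat) (js : list job) : Prop :=
  match js with
  | [] => True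
  | j :: r =>
      let p := pr hist (ja j) rem in
      feasible_prices W rem (ja j) p /\
      feasible_run_aux W pr (hist ++ [j]) (snd (step p j rem)) r
  end.

Definition feasible_run (N W : nat) (c : nat -> nat) (pr : pricer) (js : list job)
  : Prop := feasible_run_aux W pr [] (cap N c) js.

(** Pricing policies: maps from bandwidth vectors lambda in {0..C}^{A_t}
    (indexed by offsets 0..W-1) to feasible price vectors. *)
Definition policy := (nat -> nat) -> (nat -> R).

Definition feasible_policy (C W : nat) (g : policy) : Prop :=
  forall lam : nat -> nat, (forall k, (k < W)%nat -> (lam k <= C)%nat) ->
  forall k, (k < W)%nat ->
    0 < g lam k /\ g lam k <= 1 /\ (lam k = O -> g lam k = 1).

Definition window (W : nat) (rem : nat -> nat) (a : nat) : nat -> nat :=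
  fun k => if Nat.ltb k W then rem (a + k)%nat else O.

Definition policy_pricer (W : nat) (g : policy) : pricer :=
  fun _ a rem => g (window W rem a).

(** A randomized posted price mechanism: a finite probability distribution
    over deterministic online pricers (the instance is fixed in advance). *)
Definition rand_mech := list (R * pricer).

Definition is_distribution (M : rand_mech) : Prop :=
  Forall (fun wp => 0 <= fst wp) M /\
  fold_right (fun wp acc => fst wp + acc) 0 M = 1.

Definition expected_revenue (N : nat) (c : nat -> nat) (M : rand_mech)
    (js : list job) : R :=
  fold_right (fun wp acc => fst wp * revenue N c (snd wp) js + acc) 0 M.

Definition regret_exponent (C W : nat) : R :=
  / 2 * (1 + INR (C * W) / (INR (C * W) + 1)).

(* Cut the T jobs into B ~ sqrt T blocks of at most B jobs and run Hedge over the
   policies of Gamma, block by block.  Hedge needs full information, and it has it: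
   once a block is over, the revenue any policy would have earned on it, had it been
   played from the start, can be recomputed from the revealed jobs.  This costs
   O(B sqrt (B ln |Gamma|)) = O(T^(3/4) sqrt (ln |Gamma|)) against the best policy.

   To play the policy h chosen for a block, the mechanism simulates h from the start
   and posts h's prices for the simulated bandwidth as long as the true bandwidth
   dominates it, and unit prices (refused by every job) before that.  Jobs arriving
   W slots after the first job of the block find the true bandwidth untouched, so
   only jobs whose windows lie in a range of 2W slots are blocked, and each of them
   that h would have served takes simulated bandwidth from that range: at most 2CW
   is lost per block, O(CW sqrt T) in all.
   The random choice of Hedge is realised by |Gamma| B^2 equally likely seeds that
   round its distribution, at a cost of 1/B per block.  As CW >= 1 whenever the
   regret can be positive, T^(3/4) <= T^((1 + CW/(CW+1))/2). *)

From Stdlib Require Import Reals List Lra Lia Sorted ZArith.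
Import ListNotations.
Open Scope R_scope.

(** * Finite sums and logarithms *)

Lemma sumR_ext f g n : (forall k, (k < n)%nat -> f k = g k) -> sumR f n = sumR g n.
Proof.
  induction n as [|n IH]; intros Hfg; simpl; [reflexivity|].
  rewrite IH, Hfg; auto.
Qed.

Lemma sumR_le f g n : (forall k, (k < n)%nat -> f k <= g k) -> sumR f n <= sumR g n.
Proof.
  induction n as [|n IH]; intros Hfg; simpl; [lra|].
  pose proof (Hfg n ltac:(lia)); pose proof (IH ltac:(intros; apply Hfg; lia)); lra.
Qed.

Lemma sumR_const r n : sumR (fun _ => r) n = INR n * r.
Proof. induction n as [|n IH]; simpl sumR; [simpl; lra|]. rewrite IH, S_INR; lra. Qed.

Lemma sumR_ge0 f n : (forall k, (k < n)%nat -> 0 <= f k) -> 0 <= sumR f n.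
Proof.
  intros Hf. rewrite <- (Rmult_0_r (INR n)), <- sumR_const. now apply sumR_le.
Qed.

Lemma sumR_add f g n : sumR (fun k => f k + g k) n = sumR f n + sumR g n.
Proof. induction n; simpl; lra. Qed.

Lemma sumR_sub f g n : sumR (fun k => f k - g k) n = sumR f n - sumR g n.
Proof. induction n; simpl; lra. Qed.

Lemma sumR_scal r f n : sumR (fun k => r * f k) n = r * sumR f n.
Proof. induction n as [|n IH]; simpl; [lra|]. rewrite IH; lra. Qed.

Lemma sumR_succ_l f n : sumR f (S n) = f 0%nat + sumR (fun k => f (S k)) n.
Proof. induction n as [|n IH]; simpl in *; [lra|]. rewrite IH; lra. Qed.

Lemma sumR_split f a b : sumR f (a + b) = sumR f a + sumR (fun k => f (a + k)%nat) b.
Proof.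
  induction b as [|b IH]; simpl; [rewrite Nat.add_0_r; lra|].
  rewrite Nat.add_succ_r; simpl; rewrite IH; lra.
Qed.

Lemma sumR_term_le f n k : (forall i, (i < n)%nat -> 0 <= f i) -> (k < n)%nat -> f k <= sumR f n.
Proof.
  induction n as [|n IH]; intros Hf Hk; [lia|]. simpl.
  destruct (Nat.eq_dec k n) as [->|Hkn].
  - pose proof (sumR_ge0 f n ltac:(intros; apply Hf; lia)); lra.
  - pose proof (IH ltac:(intros; apply Hf; lia) ltac:(lia)); pose proof (Hf n ltac:(lia)); lra.
Qed.

Lemma sumR_swap (f : nat -> nat -> R) n m :
  sumR (fun u => sumR (fun b => f u b) m) n = sumR (fun b => sumR (fun u => f u b) n) m.
Proof.
  induction n as [|n IH]; simpl.
  - rewrite sumR_const; simpl; lra.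
  - rewrite IH, <- sumR_add; reflexivity.
Qed.

Lemma sumR_average_swap (G : nat -> nat -> R) (K : R) B L : 0 < INR L ->
  / INR L * sumR (fun u => sumR (fun b => G b u - K) B) L
  = sumR (fun b => / INR L * sumR (fun u => G b u) L) B - INR B * K.
Proof.
  intros HL.
  rewrite (sumR_ext _ (fun u => sumR (fun b => G b u) B - INR B * K))
    by (intros; rewrite sumR_sub, sumR_const; reflexivity).
  rewrite sumR_sub, sumR_swap, sumR_const, sumR_scal. field. lra.
Qed.

Fixpoint prodR (f : nat -> R) (n : nat) : R :=
  match n with O => 1 | S m => prodR f m * f m end.

Lemma prodR_gt0 f n : (forall k, (k < n)%nat -> 0 < f k) -> 0 < prodR f n.
Proof.
  induction n as [|n IH]; intros Hf; simpl; [lra|].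
  apply Rmult_lt_0_compat; [apply IH; intros; apply Hf|apply Hf]; lia.
Qed.

Lemma prodR_ext f g n : (forall k, (k < n)%nat -> f k = g k) -> prodR f n = prodR g n.
Proof.
  induction n as [|n IH]; intros Hfg; simpl; [reflexivity|].
  rewrite IH, Hfg; auto.
Qed.

Lemma ln_prodR f n : (forall k, (k < n)%nat -> 0 < f k) ->
  ln (prodR f n) = sumR (fun k => ln (f k)) n.
Proof.
  induction n as [|n IH]; intros Hf; simpl; [apply ln_1|].
  rewrite ln_mult, IH; auto.
  apply prodR_gt0; auto.
Qed.

Lemma ln_le x y : 0 < x -> x <= y -> ln x <= ln y.
Proof.
  intros Hx [Hxy| ->]; [apply Rlt_le, ln_increasing|]; auto; lra.
Qed.

Lemma ln_le_sub_1 x : 0 < x -> ln x <= x - 1.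
Proof. intros Hx. pose proof (exp_ineq1_le (ln x)) as H. rewrite exp_ln in H; lra. Qed.

Lemma ln_1_add_ge y : 0 <= y -> y - y * y <= ln (1 + y).
Proof.
  intros Hy.
  assert (H : ln (/ (1 + y)) <= / (1 + y) - 1)
    by (apply ln_le_sub_1, Rinv_0_lt_compat; lra).
  rewrite ln_Rinv in H by lra.
  assert (E : 1 - / (1 + y) - (y - y * y) = y * y * y / (1 + y)) by (field; lra).
  assert (0 <= y * y * y / (1 + y))
    by (apply Rmult_le_pos; [apply Rmult_le_pos; nra|apply Rlt_le, Rinv_0_lt_compat; lra]).
  lra.
Qed.

Lemma ln2_gt0 : 0 < ln 2.
Proof. pose proof ln_lt_2; lra. Qed.

(** * Running pricers and policies *)

Lemma argmin_from_In f best l : In (argmin_from f best l) (best :: l).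
Proof.
  revert best; induction l as [|x l IH]; intros best; simpl; auto.
  destruct Rlt_dec; [destruct (IH x)|destruct (IH best)]; simpl; auto.
Qed.

Lemma best_start_range N W p j : valid_job N W j ->
  (ja j <= best_start p j)%nat /\ (best_start p j + jl j <= jd j + 1)%nat.
Proof.
  intros (Ha & Had & Hd & Hl1 & Hl & _). unfold best_start.
  destruct (argmin_from_In (cost p (ja j) (jl j)) (ja j)
              (seq (S (ja j)) (jd j - jl j + 1 - ja j))) as [<-|Hin].
  - lia.
  - apply in_seq in Hin; lia.
Qed.

Lemma step_unit_prices N W j rem : valid_job N W j -> step (fun _ => 1) j rem = (0, rem).
Proof.
  intros (_ & _ & _ & Hl & _ & _ & _ & Hv). unfold step, cost. rewrite sumR_const.
  destruct Rlt_dec as [|Hge]; [reflexivity|].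
  exfalso; apply Hge. apply Rlt_le_trans with 1; [lra|].
  rewrite Rmult_1_r; apply (le_INR 1); exact Hl.
Qed.

Lemma step_payment_bounds N W p j rem : (forall k, (k < W)%nat -> 0 < p k) ->
  valid_job N W j -> 0 <= fst (step p j rem) < 1.
Proof.
  intros Hp Hj. destruct (best_start_range N W p j Hj) as [Hs1 Hs2].
  assert (0 <= cost p (ja j) (jl j) (best_start p j)).
  { destruct Hj as (_ & _ & _ & _ & _ & HW & _).
    apply sumR_ge0; intros k Hk; apply Rlt_le, Hp; lia. }
  destruct Hj as (_ & _ & _ & _ & _ & _ & Hv0 & Hv1).
  unfold step; destruct Rlt_dec; simpl; lra.
Qed.

Lemma step_rem_le p j rem i : (snd (step p j rem) i <= rem i)%nat.
Proof.
  unfold step, allocate. destruct Rlt_dec; simpl; [lia|]. destruct (_ && _)%bool; lia.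
Qed.

Lemma step_rem_beyond_window N W p j rem i : valid_job N W j -> (ja j + W <= i)%nat ->
  snd (step p j rem) i = rem i.
Proof.
  intros Hj Hi. destruct (best_start_range N W p j Hj) as [_ Hs].
  destruct Hj as (_ & _ & _ & _ & _ & HW & _).
  unfold step, allocate. destruct Rlt_dec; simpl; [reflexivity|].
  destruct (Nat.ltb_spec i (best_start p j + jl j)); [lia|].
  now rewrite Bool.andb_false_r.
Qed.

Fixpoint run_state (pr : pricer) (hist : list job) (rem : nat -> nat) (js : list job)
  : nat -> nat :=
  match js with
  | [] => rem
  | j :: r => run_state pr (hist ++ [j]) (snd (step (pr hist (ja j) rem) j rem)) r
  end.

Lemma revenue_aux_app pr hist rem A B :
  revenue_aux pr hist rem (A ++ B) =
  revenue_aux pr hist rem A + revenue_aux pr (hist ++ A) (run_state pr hist rem A) B.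
Proof.
  revert hist rem; induction A as [|j A IH]; intros hist rem; simpl.
  - rewrite app_nil_r; lra.
  - rewrite IH, <- app_assoc; simpl; lra.
Qed.

Lemma run_state_app pr hist rem A B :
  run_state pr hist rem (A ++ B) = run_state pr (hist ++ A) (run_state pr hist rem A) B.
Proof.
  revert hist rem; induction A as [|j A IH]; intros hist rem; simpl.
  - now rewrite app_nil_r.
  - now rewrite IH, <- app_assoc.
Qed.

Lemma run_state_le pr hist rem js i : (run_state pr hist rem js i <= rem i)%nat.
Proof.
  revert hist rem; induction js as [|j js IH]; intros hist rem; simpl; [lia|].
  eapply Nat.le_trans; [apply IH|apply step_rem_le].
Qed.

Lemma run_state_beyond_windows N W pr hist rem js i :
  (forall j, In j js -> valid_job N W j /\ (ja j + W <= i)%nat) ->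
  run_state pr hist rem js i = rem i.
Proof.
  revert hist rem; induction js as [|j js IH]; intros hist rem Hjs; simpl; [reflexivity|].
  rewrite IH by (intros; apply Hjs; simpl; auto).
  destruct (Hjs j (or_introl eq_refl)); eapply step_rem_beyond_window; eauto.
Qed.

Definition policy_step (W : nat) (h : policy) (j : job) (lam : nat -> nat) : R * (nat -> nat) :=
  step (h (window W lam (ja j))) j lam.

Fixpoint policy_revenue W h lam (js : list job) : R :=
  match js with
  | [] => 0
  | j :: r => fst (policy_step W h j lam) + policy_revenue W h (snd (policy_step W h j lam)) r
  end.

Fixpoint policy_state W h lam (js : list job) : nat -> nat :=
  match js with
  | [] => lam
  | j :: r => policy_state W h (snd (policy_step W h j lam)) r
  end.

Lemma revenue_aux_policy_pricer W h hist lam js :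
  revenue_aux (policy_pricer W h) hist lam js = policy_revenue W h lam js.
Proof. revert hist lam; induction js; intros; simpl; [reflexivity|]. now rewrite IHjs. Qed.

Lemma run_state_policy_pricer W h hist lam js :
  run_state (policy_pricer W h) hist lam js = policy_state W h lam js.
Proof. revert hist lam; induction js; intros; simpl; auto. Qed.

Lemma policy_state_app W h lam A B :
  policy_state W h lam (A ++ B) = policy_state W h (policy_state W h lam A) B.
Proof. revert lam; induction A; intros; simpl; auto. Qed.

Definition capacities_le (N C : nat) (c : nat -> nat) : Prop :=
  forall i, (1 <= i <= N)%nat -> (c i <= C)%nat.

Definition below_cap N c (lam : nat -> nat) : Prop := forall i, (lam i <= cap N c i)%nat.

Lemma below_cap_cap N c : below_cap N c (cap N c).
Proof. intros i; apply le_n. Qed.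

Lemma below_cap_step N c p j lam : below_cap N c lam -> below_cap N c (snd (step p j lam)).
Proof. intros Hlam i. eapply Nat.le_trans; [apply step_rem_le|apply Hlam]. Qed.

Lemma below_cap_policy_state N c W h js : below_cap N c (policy_state W h (cap N c) js).
Proof.
  intros i. rewrite <- (run_state_policy_pricer W h []). apply run_state_le.
Qed.

Lemma cap_le N c C i : capacities_le N C c -> (cap N c i <= C)%nat.
Proof.
  intros Hc. unfold cap.
  destruct (Nat.leb_spec 1 i), (Nat.leb_spec i N); simpl; try lia. apply Hc; lia.
Qed.

Lemma cap_beyond N c i : (N < i)%nat -> cap N c i = 0%nat.
Proof.
  intros Hi. unfold cap. destruct (Nat.leb_spec i N); [lia|]. now rewrite Bool.andb_false_r.
Qed.

Lemma policy_prices_feasible N C W c h lam a :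
  capacities_le N C c -> feasible_policy C W h ->
  below_cap N c lam -> feasible_prices W lam a (h (window W lam a)).
Proof.
  intros Hc Hh Hlam k Hk.
  assert (Hwin : forall k, (k < W)%nat -> (window W lam a k <= C)%nat).
  { intros k' Hk'. unfold window. destruct (Nat.ltb_spec k' W); [|lia].
    eapply Nat.le_trans; [apply Hlam|apply cap_le; exact Hc]. }
  destruct (Hh _ Hwin k Hk) as (Hpos & Hle1 & Hempty). repeat split; auto.
  intros H0; apply Hempty. unfold window. destruct (Nat.ltb_spec k W); [exact H0|lia].
Qed.

Lemma policy_run_feasible N C W c h :
  capacities_le N C c -> feasible_policy C W h ->
  forall js hist rem, below_cap N c rem -> feasible_run_aux W (policy_pricer W h) hist rem js.
Proof.
  intros Hc Hh js. induction js as [|j js IH]; intros hist rem Hrem; simpl; [exact I|].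
  split.
  - apply (policy_prices_feasible N C W c); assumption.
  - apply IH, below_cap_step, Hrem.
Qed.

(** * Shadowing a policy *)

Definition window_load (W a0 : nat) (lam : nat -> nat) : R :=
  sumR (fun k => INR (lam (a0 + k)%nat)) (2 * W).

Lemma window_load_ge0 W a0 lam : 0 <= window_load W a0 lam.
Proof. apply sumR_ge0; intros; apply pos_INR. Qed.

Lemma window_load_le N C W c a0 lam :
  capacities_le N C c -> below_cap N c lam ->
  window_load W a0 lam <= 2 * INR C * INR W.
Proof.
  intros Hc Hlam. unfold window_load.
  apply Rle_trans with (sumR (fun _ => INR C) (2 * W)).
  - apply sumR_le; intros k _. apply le_INR.
    eapply Nat.le_trans; [apply Hlam|apply cap_le; exact Hc].
  - rewrite sumR_const, mult_INR; simpl; lra.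
Qed.

Lemma allocate_le lam s l i : (allocate lam s l i <= lam i)%nat.
Proof. unfold allocate. destruct (_ && _)%bool; lia. Qed.

(* A served job pays less than 1, and it takes a unit of some slot of its
   window that still had bandwidth: feasible prices are 1 on exhausted slots. *)
Lemma policy_payment_le_load_drop N C W c h a0 j lam :
  capacities_le N C c -> feasible_policy C W h ->
  valid_job N W j -> below_cap N c lam -> (a0 <= ja j < a0 + W)%nat ->
  fst (policy_step W h j lam)
  <= window_load W a0 lam - window_load W a0 (snd (policy_step W h j lam)).
Proof.
  intros Hc Hh Hj Hlam Ha0. unfold policy_step.
  set (p := h (window W lam (ja j))).
  assert (Hp : feasible_prices W lam (ja j) p) by (apply (policy_prices_feasible N C W c); auto).
  destruct (best_start_range N W p j Hj) as [Hs1 Hs2].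
  pose proof Hj as (_ & _ & _ & Hl1 & _ & HW & _ & Hv1).
  unfold step; set (s := best_start p j) in *.
  destruct Rlt_dec as [_|Hserved]; simpl; [lra|].
  assert (Hs_avail : (1 <= lam s)%nat).
  { destruct (Nat.eq_dec (lam s) 0) as [E|E]; [exfalso|lia]. apply Hserved.
    assert (Hps : p (s - ja j + 0)%nat = 1).
    { rewrite Nat.add_0_r. apply (Hp (s - ja j)%nat ltac:(lia)).
      now replace (ja j + (s - ja j))%nat with s by lia. }
    apply Rlt_le_trans with 1; [lra|]. unfold cost. rewrite <- Hps.
    apply (sumR_term_le (fun k => p (s - ja j + k)%nat)); [|lia].
    intros; apply Rlt_le, Hp; lia. }
  unfold window_load. rewrite <- sumR_sub.
  set (drop := fun k => INR (lam (a0 + k)%nat) - INR (allocate lam s (jl j) (a0 + k))).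
  apply Rle_trans with (drop (s - a0)%nat).
  - unfold drop. replace (a0 + (s - a0))%nat with s by lia. unfold allocate.
    destruct (Nat.leb_spec s s), (Nat.ltb_spec s (s + jl j)); try lia; simpl.
    rewrite minus_INR by lia; simpl; lra.
  - apply (sumR_term_le drop); [|lia].
    intros k _. pose proof (le_INR _ _ (allocate_le lam s (jl j) (a0 + k))). unfold drop; lra.
Qed.

Lemma policy_revenue_bounds N C W c h lam js :
  capacities_le N C c -> feasible_policy C W h ->
  (forall j, In j js -> valid_job N W j) -> below_cap N c lam ->
  0 <= policy_revenue W h lam js <= INR (length js).
Proof.
  intros Hc Hh. revert lam; induction js as [|j js IH]; intros lam Hjs Hlam; [simpl; lra|].
  cbn [policy_revenue length]. rewrite S_INR.
  assert (Hpos : forall k, (k < W)%nat -> 0 < h (window W lam (ja j)) k)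
    by (intros; apply (policy_prices_feasible N C W c); auto).
  pose proof (step_payment_bounds N W _ j lam Hpos (Hjs j (or_introl eq_refl))).
  pose proof (IH _ ltac:(intros; apply Hjs; simpl; auto)
                (below_cap_step N c (h (window W lam (ja j))) j lam Hlam)).
  unfold policy_step in *; lra.
Qed.

Lemma policy_revenue_no_bandwidth N C W c h lam js :
  (C * W = 0)%nat -> capacities_le N C c ->
  feasible_policy C W h -> (forall j, In j js -> valid_job N W j) -> below_cap N c lam ->
  policy_revenue W h lam js <= 0.
Proof.
  intros HCW Hc Hh. revert lam; induction js as [|j js IH]; intros lam Hjs Hlam; simpl; [lra|].
  pose proof (Hjs j (or_introl eq_refl)) as Hj.
  assert (HW : (1 <= W)%nat) by (destruct Hj as (_ & _ & _ & _ & _ & HW & _); lia).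
  pose proof (policy_payment_le_load_drop N C W c h (ja j) j lam Hc Hh Hj Hlam ltac:(lia)).
  pose proof (window_load_le N C W c (ja j) lam Hc Hlam).
  pose proof (window_load_ge0 W (ja j) (snd (policy_step W h j lam))).
  pose proof (IH _ ltac:(intros; apply Hjs; simpl; auto)
                (below_cap_step N c (h (window W lam (ja j))) j lam Hlam)).
  destruct (proj1 (Nat.eq_mul_0 C W) HCW) as [->| ->]; [|lia].
  unfold policy_step in *; simpl in *; lra.
Qed.

(* Only slots in [a, N] are compared: later jobs arrive after [a], and beyond
   [N] no state below the capacity has bandwidth. *)
Definition dominates (N a : nat) (rem lam : nat -> nat) : bool :=
  forallb (fun i => Nat.leb (lam i) (rem i)) (seq a (S N - a)).

(* Unit prices are refused by every job ([step_unit_prices]). *)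
Definition shadow_prices N W (h : policy) (a : nat) (rem lam : nat -> nat) : nat -> R :=
  if dominates N a rem lam then h (window W lam a) else fun _ => 1.

Lemma dominates_intro N a rem lam :
  (forall i, (a <= i)%nat -> (lam i <= rem i)%nat) -> dominates N a rem lam = true.
Proof.
  intros H. apply forallb_forall. intros i Hi. apply in_seq in Hi. apply Nat.leb_le, H; lia.
Qed.

Lemma dominates_elim N c a rem lam : dominates N a rem lam = true -> below_cap N c lam ->
  forall i, (a <= i)%nat -> (lam i <= rem i)%nat.
Proof.
  intros H Hlam i Hi. destruct (Nat.le_gt_cases i N).
  - unfold dominates in H. rewrite forallb_forall in H.
    apply Nat.leb_le, H, in_seq; lia.
  - specialize (Hlam i). rewrite cap_beyond in Hlam by lia. lia.
Qed.

Lemma shadow_prices_feasible N C W c h a rem lam :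
  capacities_le N C c -> feasible_policy C W h ->
  below_cap N c lam -> feasible_prices W rem a (shadow_prices N W h a rem lam).
Proof.
  intros Hc Hh Hlam k Hk. unfold shadow_prices.
  destruct (dominates N a rem lam) eqn:Hdom; [|lra].
  destruct (policy_prices_feasible N C W c h lam a Hc Hh Hlam k Hk) as (Hpos & Hle1 & Hempty).
  repeat split; auto. intros H0. apply Hempty.
  pose proof (dominates_elim N c a rem lam Hdom Hlam (a + k)%nat ltac:(lia)); lia.
Qed.

Lemma step_dominated p j lam rem a : (forall i, (a <= i)%nat -> (lam i <= rem i)%nat) ->
  fst (step p j lam) = fst (step p j rem) /\
  (forall i, (a <= i)%nat -> (snd (step p j lam) i <= snd (step p j rem) i)%nat).
Proof.
  intros H. unfold step, allocate. destruct Rlt_dec; simpl; split; auto.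
  intros i Hi. destruct (_ && _)%bool; specialize (H i Hi); lia.
Qed.

Section Shadowing.
Variables (N C W : nat) (c : nat -> nat) (h : policy) (pr : pricer).
Hypothesis Hc : capacities_le N C c.
Hypothesis Hh : feasible_policy C W h.

Definition follows_shadow (hist : list job) (lam : nat -> nat) (n : nat) : Prop :=
  forall Q a rem, (length Q < n)%nat ->
  pr (hist ++ Q) a rem = shadow_prices N W h a rem (policy_state W h lam Q).

Lemma follows_shadow_mono hist lam n m :
  follows_shadow hist lam n -> (m <= n)%nat -> follows_shadow hist lam m.
Proof. intros H Hmn Q a rem HQ. apply H; lia. Qed.

Lemma follows_shadow_now hist lam n a rem :
  follows_shadow hist lam (S n) -> pr hist a rem = shadow_prices N W h a rem lam.
Proof. intros H. rewrite <- (app_nil_r hist). apply (H []); simpl; lia. Qed.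

Lemma follows_shadow_next hist lam j n : follows_shadow hist lam (S n) ->
  follows_shadow (hist ++ [j]) (snd (policy_step W h j lam)) n.
Proof. intros H Q a rem HQ. rewrite <- app_assoc. apply (H (j :: Q)); simpl; lia. Qed.

Lemma revenue_follows_shadow_dominated js hist rem lam a0 :
  (forall j, In j js -> (a0 <= ja j)%nat) ->
  (forall i, (a0 <= i)%nat -> (lam i <= rem i)%nat) -> below_cap N c lam ->
  follows_shadow hist lam (length js) ->
  revenue_aux pr hist rem js = policy_revenue W h lam js.
Proof.
  revert hist rem lam. induction js as [|j js IH]; intros hist rem lam Hjs Hdom Hlam Hpr;
    simpl; [reflexivity|].
  rewrite (follows_shadow_now hist lam (length js)) by exact Hpr. unfold shadow_prices.
  pose proof (Hjs j (or_introl eq_refl)) as Hj.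
  rewrite dominates_intro by (intros i Hi; apply Hdom; lia).
  destruct (step_dominated (h (window W lam (ja j))) j lam rem a0 Hdom) as [Epay Hdom'].
  unfold policy_step. rewrite Epay. f_equal.
  apply IH; auto.
  - intros; apply Hjs; simpl; auto.
  - apply below_cap_step, Hlam.
  - apply follows_shadow_next, Hpr.
Qed.

(* Until dominance is reached, the only jobs blocked are the ones arriving in
   [a0, a0 + W), and each of them costs the policy at most the drop it causes
   in the load of [a0, a0 + 2W). *)
Lemma revenue_follows_shadow_ge js hist rem lam a0 :
  StronglySorted (fun x y => (ja x <= ja y)%nat) js ->
  (forall j, In j js -> valid_job N W j /\ (a0 <= ja j)%nat) ->
  (forall i, (a0 + W <= i)%nat -> rem i = cap N c i) -> below_cap N c lam ->
  follows_shadow hist lam (length js) ->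
  policy_revenue W h lam js - window_load W a0 lam <= revenue_aux pr hist rem js.
Proof.
  revert hist lam. induction js as [|j js IH]; intros hist lam Hsorted Hjs Hrem Hlam Hpr.
  { simpl. pose proof (window_load_ge0 W a0 lam); lra. }
  pose proof (window_load_ge0 W a0 lam).
  inversion Hsorted as [|? ? Hsorted' Hafter]; subst; rewrite Forall_forall in Hafter.
  destruct (Hjs j (or_introl eq_refl)) as [Hj Haj].
  destruct (dominates N (ja j) rem lam) eqn:Hdom.
  - rewrite (revenue_follows_shadow_dominated (j :: js) hist rem lam (ja j)); auto; [lra| |].
    + intros j' [<-|Hj']; auto.
    + apply (dominates_elim N c); auto.
  - assert (Hwin : (ja j < a0 + W)%nat).
    { destruct (Nat.lt_ge_cases (ja j) (a0 + W)) as [|Hfar]; [assumption|].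
      rewrite dominates_intro in Hdom; [discriminate|].
      intros i Hi. rewrite Hrem by lia. apply Hlam. }
    simpl. rewrite (follows_shadow_now hist lam (length js)) by exact Hpr.
    unfold shadow_prices. rewrite Hdom, (step_unit_prices N W j rem Hj). simpl.
    pose proof (policy_payment_le_load_drop N C W c h a0 j lam Hc Hh Hj Hlam ltac:(lia)).
    pose proof (IH (hist ++ [j]) (snd (policy_step W h j lam)) Hsorted'
      ltac:(intros; apply Hjs; simpl; auto) Hrem (below_cap_step N c _ j lam Hlam)
      (follows_shadow_next _ _ _ _ Hpr)).
    lra.
Qed.

End Shadowing.

(** * Hedge *)

Section Hedge.
Variables (X : nat -> nat -> R) (eps : R) (n : nat).
Hypothesis HX : forall b j, (j < n)%nat -> 0 <= X b j <= 1.
Hypothesis Heps : 0 < eps.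
Hypothesis Hn : (1 <= n)%nat.

Definition hedge_weight b j := prodR (fun b' => 1 + eps * X b' j) b.
Definition hedge_total b := sumR (hedge_weight b) n.
Definition hedge_prob b j := hedge_weight b j / hedge_total b.
Definition hedge_gain b := sumR (fun j => hedge_prob b j * X b j) n.

Lemma hedge_weight_gt0 b j : (j < n)%nat -> 0 < hedge_weight b j.
Proof. intros Hj. apply prodR_gt0. intros k _. pose proof (HX k j Hj). nra. Qed.

Lemma hedge_total_gt0 b : 0 < hedge_total b.
Proof.
  apply Rlt_le_trans with (hedge_weight b 0); [apply hedge_weight_gt0; lia|].
  apply sumR_term_le; [|lia]. intros; apply Rlt_le, hedge_weight_gt0; auto.
Qed.

Lemma hedge_prob_ge0 b j : (j < n)%nat -> 0 <= hedge_prob b j.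
Proof.
  intros Hj. apply Rlt_le, Rdiv_lt_0_compat; [apply hedge_weight_gt0; auto|apply hedge_total_gt0].
Qed.

Lemma hedge_prob_sum b : sumR (hedge_prob b) n = 1.
Proof.
  unfold hedge_prob, Rdiv.
  rewrite (sumR_ext _ (fun j => / hedge_total b * hedge_weight b j)) by (intros; lra).
  rewrite sumR_scal. apply Rinv_l, Rgt_not_eq, hedge_total_gt0.
Qed.

Lemma hedge_gain_ge0 b : 0 <= hedge_gain b.
Proof.
  apply sumR_ge0. intros j Hj. pose proof (hedge_prob_ge0 b j Hj). pose proof (HX b j Hj). nra.
Qed.

Lemma hedge_total_succ b : hedge_total (S b) = hedge_total b * (1 + eps * hedge_gain b).
Proof.
  unfold hedge_total at 1.
  rewrite (sumR_ext _ (fun j => hedge_weight b j + eps * (hedge_weight b j * X b j)))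
    by (intros; unfold hedge_weight; simpl; lra).
  rewrite sumR_add, sumR_scal.
  unfold hedge_gain, hedge_prob, Rdiv.
  rewrite (sumR_ext (fun j => _ * _ * _) (fun j => / hedge_total b * (hedge_weight b j * X b j)))
    by (intros; lra).
  rewrite sumR_scal. fold (hedge_total b). field. apply Rgt_not_eq, hedge_total_gt0.
Qed.

Lemma ln_hedge_total b :
  ln (hedge_total b) = ln (INR n) + sumR (fun k => ln (1 + eps * hedge_gain k)) b.
Proof.
  induction b as [|b IH].
  - unfold hedge_total, hedge_weight; simpl. rewrite sumR_const, Rmult_1_r; lra.
  - rewrite hedge_total_succ, ln_mult, IH; simpl; [lra|apply hedge_total_gt0|].
    pose proof (hedge_gain_ge0 b); nra.
Qed.

(* Compare the logarithm of one expert's weight with that of the total weight,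
   using [y - y^2 <= ln (1 + y) <= y]. *)
Theorem hedge_regret B j : (j < n)%nat ->
  sumR (fun b => X b j) B - sumR hedge_gain B <= eps * INR B + ln (INR n) / eps.
Proof.
  intros Hj.
  assert (Hlog : ln (hedge_weight B j) <= ln (hedge_total B)).
  { apply ln_le; [apply hedge_weight_gt0; auto|].
    apply sumR_term_le; auto. intros; apply Rlt_le, hedge_weight_gt0; auto. }
  rewrite ln_hedge_total in Hlog. unfold hedge_weight in Hlog.
  rewrite ln_prodR in Hlog by (intros k _; pose proof (HX k j Hj); nra).
  assert (Hexpert : sumR (fun b => eps * X b j - eps * eps) B
                    <= sumR (fun b => ln (1 + eps * X b j)) B).
  { apply sumR_le. intros k _. pose proof (HX k j Hj).
    pose proof (ln_1_add_ge (eps * X k j)).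
    assert (eps * X k j * (eps * X k j) <= eps * eps) by (apply Rmult_le_compat; nra).
    nra. }
  assert (Hlearner : sumR (fun b => ln (1 + eps * hedge_gain b)) B
                     <= sumR (fun b => eps * hedge_gain b) B).
  { apply sumR_le. intros k _. pose proof (hedge_gain_ge0 k).
    pose proof (ln_le_sub_1 (1 + eps * hedge_gain k)). nra. }
  rewrite sumR_sub, !sumR_scal, sumR_const in Hexpert. rewrite sumR_scal in Hlearner.
  apply Rmult_le_reg_l with eps; auto. unfold Rdiv.
  replace (eps * (eps * INR B + ln (INR n) * / eps)) with (eps * eps * INR B + ln (INR n))
    by (field; lra).
  lra.
Qed.

End Hedge.

Lemma hedge_prob_ext X X' eps n b j : (forall b' j', (b' < b)%nat -> X b' j' = X' b' j') ->
  hedge_prob X eps n b j = hedge_prob X' eps n b j.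
Proof.
  intros H. unfold hedge_prob, hedge_total, hedge_weight.
  assert (E : forall j', prodR (fun b' => 1 + eps * X b' j') b
                         = prodR (fun b' => 1 + eps * X' b' j') b)
    by (intros j'; apply prodR_ext; intros k Hk; rewrite H; auto).
  rewrite E. f_equal. apply sumR_ext. intros; apply E.
Qed.

(** * Rounding a distribution to seeds *)

(* Seats 0, 1, ... are handed out in order: [k 0] to owner 0, then [k 1] to
   owner 1, and so on; seats past the last owner go to an arbitrary owner. *)
Fixpoint seat_owner (k : nat -> nat) (m u : nat) : nat :=
  match m with
  | O => O
  | S m' => if Nat.ltb u (k O) then O else S (seat_owner (fun j => k (S j)) m' (u - k O))
  end.

Fixpoint seats (k : nat -> nat) (m : nat) : nat :=
  match m with O => O | S m' => (k O + seats (fun j => k (S j)) m')%nat end.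

Lemma INR_seats k m : INR (seats k m) = sumR (fun j => INR (k j)) m.
Proof.
  revert k; induction m as [|m IH]; intros k; [reflexivity|].
  simpl seats. rewrite plus_INR, IH, sumR_succ_l. reflexivity.
Qed.

Lemma sumR_seat_owner m : forall k F,
  sumR (fun u => F (seat_owner k m u)) (seats k m) = sumR (fun j => INR (k j) * F j) m.
Proof.
  induction m as [|m IH]; intros k F; [reflexivity|].
  simpl seats. rewrite sumR_split, sumR_succ_l. f_equal.
  - rewrite (sumR_ext _ (fun _ => F O)), sumR_const; [reflexivity|].
    intros u Hu. simpl. destruct (Nat.ltb_spec u (k O)); [reflexivity|lia].
  - rewrite <- (IH (fun j => k (S j)) (fun j => F (S j))). apply sumR_ext. intros u _. simpl.
    destruct (Nat.ltb_spec (k O + u) (k O)); [lia|].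
    now replace (k O + u - k O)%nat with u by lia.
Qed.

Lemma seat_owner_ext m : forall k k' u, (forall j, (j < m)%nat -> k j = k' j) ->
  seat_owner k m u = seat_owner k' m u.
Proof.
  induction m as [|m IH]; intros k k' u H; simpl; [reflexivity|].
  rewrite H by lia. destruct (Nat.ltb u (k' O)); [reflexivity|].
  f_equal. apply IH. intros; apply H; lia.
Qed.

Definition floor_nat (r : R) : nat := Z.to_nat (Int_part r).

Lemma floor_nat_spec r : 0 <= r -> INR (floor_nat r) <= r /\ r - 1 < INR (floor_nat r).
Proof.
  intros Hr. destruct (base_Int_part r) as [Hle Hgt].
  assert (Hz : (0 <= Int_part r)%Z).
  { assert (Hgt1 : IZR (-1) < IZR (Int_part r)) by lra. apply lt_IZR in Hgt1; lia. }
  unfold floor_nat. rewrite INR_IZR_INZ, Z2Nat.id by exact Hz. lra.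
Qed.

(* Giving each owner [j] the [floor (q j * L)] first free seats out of [L]
   loses at most one seat's worth per owner. *)
Lemma rounded_mixture_ge (q F : nat -> R) (n L : nat) (bound : R) :
  (forall j, (j < n)%nat -> 0 <= q j) -> sumR q n = 1 -> (1 <= L)%nat ->
  (forall j, 0 <= F j) -> (forall j, (j < n)%nat -> F j <= bound) ->
  sumR (fun j => q j * F j) n - INR n * bound / INR L
  <= / INR L * sumR (fun u => F (seat_owner (fun j => floor_nat (q j * INR L)) n u)) L.
Proof.
  intros Hq Hsum HL HF Hbound. set (k := fun j => floor_nat (q j * INR L)).
  assert (HLpos : 0 < INR L) by (apply (lt_INR 0); lia).
  assert (Hk : forall j, (j < n)%nat -> INR (k j) <= q j * INR L /\ q j * INR L - 1 < INR (k j))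
    by (intros j Hj; apply floor_nat_spec, Rmult_le_pos; auto; lra).
  assert (Hseats : (seats k n <= L)%nat).
  { apply INR_le. rewrite INR_seats.
    apply Rle_trans with (sumR (fun j => INR L * q j) n).
    - apply sumR_le; intros j Hj. pose proof (Hk j Hj); lra.
    - rewrite sumR_scal, Hsum; lra. }
  replace (sumR (fun u => F (seat_owner k n u)) L)
    with (sumR (fun u => F (seat_owner k n u)) (seats k n + (L - seats k n)))
    by (f_equal; lia).
  rewrite sumR_split, sumR_seat_owner.
  assert (Hrest : 0 <= sumR (fun u => F (seat_owner k n (seats k n + u))) (L - seats k n))
    by (apply sumR_ge0; auto).
  assert (Hfloor : INR L * sumR (fun j => q j * F j) n - INR n * bound
                   <= sumR (fun j => INR (k j) * F j) n).
  { apply Rle_trans with (sumR (fun j => INR L * (q j * F j) - F j) n).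
    - rewrite sumR_sub, sumR_scal.
      assert (sumR F n <= INR n * bound) by (rewrite <- sumR_const; apply sumR_le; auto).
      lra.
    - apply sumR_le. intros j Hj. pose proof (Hk j Hj). pose proof (HF j). nra. }
  apply Rmult_le_reg_l with (INR L); [exact HLpos|].
  rewrite <- Rmult_assoc, Rinv_r, Rmult_1_l by lra.
  unfold Rdiv. rewrite Rmult_minus_distr_l.
  replace (INR L * (INR n * bound * / INR L)) with (INR n * bound) by (field; lra).
  lra.
Qed.

(** * Blocks of jobs *)

Lemma firstn_add {A} a b (l : list A) : firstn (a + b) l = firstn a l ++ firstn b (skipn a l).
Proof.
  revert l; induction a as [|a IH]; intros l; [reflexivity|].
  destruct l as [|x l]; simpl; [now destruct b|]. now rewrite IH.
Qed.

Lemma StronglySorted_app_inv {A} (Rel : A -> A -> Prop) l1 l2 :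
  StronglySorted Rel (l1 ++ l2) ->
  StronglySorted Rel l1 /\ StronglySorted Rel l2 /\
  (forall x y, In x l1 -> In y l2 -> Rel x y).
Proof.
  induction l1 as [|x l1 IH]; simpl; intros H.
  - repeat split; auto; [constructor|contradiction].
  - inversion H as [|? ? H1 Hx]; subst. rewrite Forall_forall in Hx.
    destruct (IH H1) as (S1 & S2 & Hlt). repeat split; auto.
    + constructor; auto. apply Forall_forall; intros; apply Hx, in_or_app; auto.
    + intros x' y [<-|Hx'] Hy; auto. apply Hx, in_or_app; auto.
Qed.

Section Blocks.
Variable B : nat.

Definition block (b : nat) (js : list job) : list job := firstn B (skipn (b * B) js).
Definition before_block (b : nat) (js : list job) : list job := firstn (b * B) js.

Lemma before_block_succ b js : before_block (S b) js = before_block b js ++ block b js.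
Proof. unfold before_block, block. rewrite <- firstn_add. f_equal; lia. Qed.

Lemma In_block b js j : In j (block b js) -> In j js.
Proof.
  unfold block. intros Hj. rewrite <- (firstn_skipn (b * B) js).
  apply in_or_app; right. rewrite <- (firstn_skipn B (skipn (b * B) js)). apply in_or_app; auto.
Qed.

Lemma revenue_aux_blocks pr rem js m : (length js <= m * B)%nat ->
  revenue_aux pr [] rem js =
  sumR (fun b => revenue_aux pr (before_block b js)
                   (run_state pr [] rem (before_block b js)) (block b js)) m.
Proof.
  intros Hlen.
  assert (Hupto : forall k, revenue_aux pr [] rem js =
    sumR (fun b => revenue_aux pr (before_block b js)
                     (run_state pr [] rem (before_block b js)) (block b js)) k
    + revenue_aux pr (before_block k js) (run_state pr [] rem (before_block k js))
        (skipn (k * B) js)).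
  { induction k as [|k IH]; [unfold before_block; simpl; lra|].
    rewrite IH. simpl sumR. rewrite Rplus_assoc. f_equal.
    rewrite <- (firstn_skipn B (skipn (k * B) js)) at 1. rewrite revenue_aux_app.
    fold (block k js). rewrite before_block_succ, run_state_app, skipn_skipn.
    do 3 f_equal; lia. }
  rewrite (Hupto m), skipn_all2 by lia. simpl; lra.
Qed.

Definition block_gain N W (c : nat -> nat) (g : policy) (b : nat) (js : list job) : R :=
  policy_revenue W g (policy_state W g (cap N c) (before_block b js)) (block b js).

Lemma policy_revenue_blocks N W c g js m : (length js <= m * B)%nat ->
  revenue N c (policy_pricer W g) js = sumR (fun b => block_gain N W c g b js) m.
Proof.
  intros Hlen. unfold revenue. rewrite (revenue_aux_blocks _ _ js m Hlen).
  apply sumR_ext. intros b _. unfold block_gain.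
  now rewrite revenue_aux_policy_pricer, run_state_policy_pricer.
Qed.

Lemma block_gain_bounds N C W c g b js :
  capacities_le N C c -> feasible_policy C W g ->
  (forall j, In j js -> valid_job N W j) -> 0 <= block_gain N W c g b js <= INR B.
Proof.
  intros Hc Hg Hjs. unfold block_gain.
  destruct (policy_revenue_bounds N C W c g (policy_state W g (cap N c) (before_block b js))
              (block b js) Hc Hg) as [H0 HB].
  - intros j Hj; apply Hjs, (In_block b), Hj.
  - apply below_cap_policy_state.
  - split; [exact H0|]. eapply Rle_trans; [exact HB|].
    apply le_INR. unfold block. rewrite length_firstn. lia.
Qed.

Lemma block_gain_prefix N W c g b js js' M :
  firstn M js' = firstn M js -> (S b * B <= M)%nat ->
  block_gain N W c g b js' = block_gain N W c g b js.
Proof.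
  intros HM Hb.
  assert (E : forall K, (K <= M)%nat -> firstn K js' = firstn K js).
  { intros K HK. rewrite <- (Nat.min_l K M HK), <- !firstn_firstn, HM. reflexivity. }
  unfold block_gain, before_block, block. rewrite !firstn_skipn_comm, !E by (simpl in Hb; lia).
  reflexivity.
Qed.

End Blocks.

(** * The mechanism *)

Section Mechanism.
Variables (N C W : nat) (c : nat -> nat) (Gamma : list policy) (g0 : policy)
  (B L : nat) (eps : R).
Let n := length Gamma.

Definition normalized_gain (b j : nat) (js : list job) : R :=
  block_gain B N W c (nth j Gamma g0) b js / INR B.

Definition seat_counts (b : nat) (js : list job) (j : nat) : nat :=
  floor_nat (hedge_prob (fun b' j' => normalized_gain b' j' js) eps n b j * INR L).

Definition block_policy (b : nat) (js : list job) (u : nat) : policy :=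
  nth (seat_owner (seat_counts b js) n u) Gamma g0.

(* Seed [u] runs Hedge over blocks of [B] jobs with full-information gains.
   In block [b] it plays the policy owning seat [u] when Hedge's distribution is
   rounded to [L] seats, shadowing a run of that policy from the start. *)
Definition seed_pricer (u : nat) : pricer := fun hist a rem =>
  let h := block_policy (length hist / B) hist u in
  shadow_prices N W h a rem (policy_state W h (cap N c) hist).

Lemma block_policy_prefix b js js' u :
  firstn (b * B) js' = firstn (b * B) js -> block_policy b js' u = block_policy b js u.
Proof.
  intros H. unfold block_policy, seat_counts. f_equal. apply seat_owner_ext. intros j _.
  do 2 f_equal. apply hedge_prob_ext. intros b' j' Hb. unfold normalized_gain. f_equal.
  apply (block_gain_prefix B N W c _ b' js js' (b * B)); [exact H|].
  apply Nat.mul_le_mono_r; lia.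
Qed.

Hypothesis Hc : capacities_le N C c.
Hypothesis HGamma : Forall (feasible_policy C W) Gamma.
Hypothesis Hg0 : In g0 Gamma.
Hypothesis HB : (1 <= B)%nat.

Lemma nth_policy_feasible j : feasible_policy C W (nth j Gamma g0).
Proof.
  rewrite Forall_forall in HGamma. destruct (Nat.lt_ge_cases j (length Gamma)).
  - apply HGamma, nth_In; assumption.
  - rewrite nth_overflow by assumption. apply HGamma, Hg0.
Qed.

Lemma block_policy_feasible b js u : feasible_policy C W (block_policy b js u).
Proof. apply nth_policy_feasible. Qed.

Lemma seed_pricer_feasible u js hist rem : feasible_run_aux W (seed_pricer u) hist rem js.
Proof.
  revert hist rem; induction js as [|j js IH]; intros hist rem; simpl; [exact I|].
  split; [|apply IH].
  apply (shadow_prices_feasible N C W c); auto using block_policy_feasible, below_cap_policy_state.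
Qed.

Lemma seed_pricer_follows_shadow u b hist : length hist = (b * B)%nat ->
  let h := block_policy b hist u in
  follows_shadow N W h (seed_pricer u) hist (policy_state W h (cap N c) hist) B.
Proof.
  intros Hlen h Q a rem HQ. unfold seed_pricer.
  replace (length (hist ++ Q) / B)%nat with b.
  2:{ rewrite length_app, Hlen, Nat.div_add_l, Nat.div_small by lia. lia. }
  replace (block_policy b (hist ++ Q) u) with h.
  2:{ symmetry. apply block_policy_prefix.
      rewrite firstn_app, Hlen, Nat.sub_diag, <- Hlen, firstn_all; simpl. apply app_nil_r. }
  now rewrite policy_state_app.
Qed.

Lemma seed_pricer_block_ge u b hist Q :
  length hist = (b * B)%nat -> (length Q <= B)%nat ->
  StronglySorted (fun x y => (ja x <= ja y)%nat) (hist ++ Q) ->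
  (forall j, In j (hist ++ Q) -> valid_job N W j) ->
  let h := block_policy b hist u in
  policy_revenue W h (policy_state W h (cap N c) hist) Q - 2 * INR C * INR W
  <= revenue_aux (seed_pricer u) hist (run_state (seed_pricer u) [] (cap N c) hist) Q.
Proof.
  intros Hlen HQ Hsorted Hvalid h.
  assert (HCW : 0 <= 2 * INR C * INR W) by (pose proof (pos_INR C); pose proof (pos_INR W); nra).
  destruct Q as [|x Q]; [simpl; lra|].
  apply StronglySorted_app_inv in Hsorted as (_ & HsortedQ & Hbefore).
  pose proof (window_load_le N C W c (ja x) (policy_state W h (cap N c) hist) Hc
                (below_cap_policy_state N c W h hist)).
  enough (policy_revenue W h (policy_state W h (cap N c) hist) (x :: Q)
          - window_load W (ja x) (policy_state W h (cap N c) hist)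
          <= revenue_aux (seed_pricer u) hist (run_state (seed_pricer u) [] (cap N c) hist)
               (x :: Q))
    by lra.
  apply (revenue_follows_shadow_ge N C W c); auto.
  - apply block_policy_feasible.
  - intros j Hj. split; [apply Hvalid, in_or_app; auto|].
    destruct Hj as [<-|Hj]; [lia|]. inversion HsortedQ as [|? ? _ Hx]; subst.
    rewrite Forall_forall in Hx. auto.
  - intros i Hi. apply (run_state_beyond_windows N W). intros j Hj.
    split; [apply Hvalid, in_or_app; auto|].
    pose proof (Hbefore j x Hj (or_introl eq_refl)); lia.
  - apply below_cap_policy_state.
  - eapply follows_shadow_mono; [apply seed_pricer_follows_shadow; exact Hlen|exact HQ].
Qed.

Lemma seed_pricer_revenue_ge u js :
  (forall j, In j js -> valid_job N W j) ->
  StronglySorted (fun x y => (ja x <= ja y)%nat) js -> (length js <= B * B)%nat ->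
  sumR (fun b => block_gain B N W c (block_policy b js u) b js - 2 * INR C * INR W) B
  <= revenue N c (seed_pricer u) js.
Proof.
  intros Hvalid Hsorted Hlen. unfold revenue. rewrite (revenue_aux_blocks B _ _ js B Hlen).
  apply sumR_le. intros b _.
  assert (HCW : 0 <= 2 * INR C * INR W) by (pose proof (pos_INR C); pose proof (pos_INR W); nra).
  unfold block_gain.
  destruct (block B b js) as [|x Q] eqn:Hblock; [simpl; lra|].
  assert (Hsplit : js = before_block B (S b) js ++ skipn (S b * B) js)
    by (symmetry; apply firstn_skipn).
  rewrite before_block_succ, Hblock in Hsplit.
  assert (Hhist : length (before_block B b js) = (b * B)%nat).
  { assert (Hne : length (block B b js) <> 0%nat) by (rewrite Hblock; discriminate).
    unfold block in Hne. rewrite length_firstn, length_skipn in Hne.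
    apply firstn_length_le; lia. }
  rewrite <- (block_policy_prefix b js (before_block B b js) u)
    by (unfold before_block; rewrite firstn_firstn, Nat.min_id; reflexivity).
  apply seed_pricer_block_ge; auto.
  - rewrite <- Hblock. unfold block. rewrite length_firstn. lia.
  - rewrite Hsplit in Hsorted. now apply StronglySorted_app_inv in Hsorted.
  - intros j Hj. apply Hvalid. rewrite Hsplit. apply in_or_app; auto.
Qed.

End Mechanism.

Definition uniform_mech (L : nat) (f : nat -> pricer) : rand_mech :=
  map (fun u => (/ INR L, f u)) (seq 0 L).

Lemma uniform_mech_distribution L f : (1 <= L)%nat -> is_distribution (uniform_mech L f).
Proof.
  intros HL. assert (HLpos : 0 < INR L) by (apply (lt_INR 0); lia). split.
  - apply Forall_forall. intros x Hx. apply in_map_iff in Hx as (u & <- & _).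
    apply Rlt_le, Rinv_0_lt_compat, HLpos.
  - assert (Hsum : forall m s, fold_right (fun wp acc => fst wp + acc) 0
                       (map (fun u => (/ INR L, f u)) (seq s m)) = INR m * / INR L).
    { induction m as [|m IH]; intros s; [simpl; lra|].
      rewrite S_INR. simpl. rewrite IH; lra. }
    unfold uniform_mech. rewrite Hsum. field. lra.
Qed.

Lemma expected_revenue_map_seq N c w (f : nat -> pricer) s m js :
  expected_revenue N c (map (fun u => (w, f u)) (seq s m)) js
  = sumR (fun u => w * revenue N c (f (s + u)%nat) js) m.
Proof.
  revert s; induction m as [|m IH]; intros s; [reflexivity|].
  rewrite sumR_succ_l, Nat.add_0_r. unfold expected_revenue in *. simpl.
  rewrite IH. f_equal. apply sumR_ext. intros u _. now rewrite Nat.add_succ_r.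
Qed.

Lemma expected_revenue_uniform_mech N c L f js :
  expected_revenue N c (uniform_mech L f) js = / INR L * sumR (fun u => revenue N c (f u) js) L.
Proof. unfold uniform_mech. rewrite expected_revenue_map_seq, <- sumR_scal. reflexivity. Qed.

Definition hedging_mech N W c (Gamma : list policy) g0 B eps : rand_mech :=
  let L := (length Gamma * B * B)%nat in
  uniform_mech L (seed_pricer N W c Gamma g0 B L eps).

Section Regret.
Variables (N C W : nat) (c : nat -> nat) (Gamma : list policy) (g0 : policy) (B : nat) (eps : R).
Let n := length Gamma.
Let L := (n * B * B)%nat.
Hypothesis Hc : capacities_le N C c.
Hypothesis HGamma : Forall (feasible_policy C W) Gamma.
Hypothesis Hg0 : In g0 Gamma.
Hypothesis HB : (1 <= B)%nat.
Hypothesis Heps : 0 < eps.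
Variable js : list job.
Hypothesis Hvalid : forall j, In j js -> valid_job N W j.
Hypothesis Hsorted : StronglySorted (fun x y => (ja x <= ja y)%nat) js.
Hypothesis Hlen : (length js <= B * B)%nat.

Let X b j := normalized_gain N W c Gamma g0 B b j js.

Lemma length_Gamma_ge1 : (1 <= n)%nat.
Proof. unfold n. destruct Gamma; simpl in *; [contradiction|lia]. Qed.

Lemma INR_B_gt0 : 0 < INR B.
Proof. apply (lt_INR 0); lia. Qed.

Lemma block_gain_nth_bounds b j : 0 <= block_gain B N W c (nth j Gamma g0) b js <= INR B.
Proof. apply (block_gain_bounds B N C W c); auto. eapply nth_policy_feasible; eauto. Qed.

Lemma normalized_gain_bounds b j : 0 <= X b j <= 1.
Proof.
  pose proof INR_B_gt0. destruct (block_gain_nth_bounds b j). unfold X, normalized_gain.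
  split; [apply Rmult_le_pos; auto; apply Rlt_le, Rinv_0_lt_compat; auto|].
  apply Rmult_le_reg_r with (INR B); auto. unfold Rdiv. rewrite Rmult_assoc, Rinv_l; lra.
Qed.

Lemma revenue_nth_policy j :
  revenue N c (policy_pricer W (nth j Gamma g0)) js = INR B * sumR (fun b => X b j) B.
Proof.
  pose proof INR_B_gt0.
  rewrite (policy_revenue_blocks B N W c _ js B) by lia. rewrite <- sumR_scal.
  apply sumR_ext. intros b _. unfold X, normalized_gain. field. lra.
Qed.

Lemma seed_average_ge b :
  INR B * hedge_gain X eps n b - / INR B
  <= / INR L * sumR (fun u => block_gain B N W c
                              (block_policy N W c Gamma g0 B L eps b js u) b js) L.
Proof.
  pose proof INR_B_gt0. pose proof length_Gamma_ge1 as Hn.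
  assert (Hn' : 0 < INR n) by (apply (lt_INR 0); lia).
  eapply Rle_trans; [|apply (rounded_mixture_ge (hedge_prob X eps n b)
                        (fun j => block_gain B N W c (nth j Gamma g0) b js) n L (INR B))].
  - apply Req_le. unfold hedge_gain, L. rewrite <- sumR_scal, !mult_INR. f_equal.
    + apply sumR_ext. intros j _. unfold X, normalized_gain. field. lra.
    + field. lra.
  - apply hedge_prob_ge0; auto. intros; apply normalized_gain_bounds.
  - apply hedge_prob_sum; auto. intros; apply normalized_gain_bounds.
  - unfold L. nia.
  - intros j. apply block_gain_nth_bounds.
  - intros j _. apply block_gain_nth_bounds.
Qed.

Lemma expected_revenue_hedging_ge :
  INR B * sumR (hedge_gain X eps n) B - 1 - INR B * (2 * INR C * INR W)
  <= expected_revenue N c (hedging_mech N W c Gamma g0 B eps) js.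
Proof.
  pose proof INR_B_gt0.
  assert (HL : 0 < INR L) by (apply (lt_INR 0); pose proof length_Gamma_ge1; unfold L; nia).
  unfold hedging_mech. fold n L. rewrite expected_revenue_uniform_mech.
  eapply Rle_trans; [|apply Rmult_le_compat_l, sumR_le;
    [apply Rlt_le, Rinv_0_lt_compat, HL|intros u _; apply (seed_pricer_revenue_ge N C); auto]].
  rewrite sumR_average_swap by exact HL.
  apply Rplus_le_compat_r.
  eapply Rle_trans; [|apply sumR_le; intros b _; apply seed_average_ge].
  rewrite sumR_sub, sumR_const, sumR_scal. field_simplify; [|lra].
  replace (INR B * / INR B) with 1 by (field; lra). lra.
Qed.

Lemma hedging_regret_le j : (j < n)%nat ->
  revenue N c (policy_pricer W (nth j Gamma g0)) js
  - expected_revenue N c (hedging_mech N W c Gamma g0 B eps) js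
  <= INR B * (eps * INR B + ln (INR n) / eps) + 1 + INR B * (2 * INR C * INR W).
Proof.
  intros Hj. pose proof INR_B_gt0.
  pose proof (hedge_regret X eps n (fun b j _ => normalized_gain_bounds b j) Heps
                length_Gamma_ge1 B j Hj).
  pose proof expected_revenue_hedging_ge. rewrite revenue_nth_policy.
  assert (INR B * (sumR (fun b => X b j) B - sumR (hedge_gain X eps n) B)
          <= INR B * (eps * INR B + ln (INR n) / eps)) by (apply Rmult_le_compat_l; lra).
  lra.
Qed.

End Regret.

(** * Choice of the parameters *)

Lemma block_size_spec T : (1 <= T)%nat ->
  (T <= S (Nat.sqrt T) * S (Nat.sqrt T))%nat /\ INR (S (Nat.sqrt T)) <= 2 * sqrt (INR T).
Proof.
  intros HT. destruct (Nat.sqrt_spec T ltac:(lia)) as [Hlo Hhi]. split; [lia|].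
  assert (Hs : INR (Nat.sqrt T) <= sqrt (INR T)).
  { rewrite <- (sqrt_square (INR (Nat.sqrt T))) by apply pos_INR.
    apply sqrt_le_1_alt. rewrite <- mult_INR. apply le_INR, Hlo. }
  assert (H1 : 1 <= sqrt (INR T))
    by (rewrite <- sqrt_1; apply sqrt_le_1_alt, (le_INR 1), HT).
  rewrite S_INR; lra.
Qed.

Lemma hedge_tuning x B : 0 < x -> 0 < B ->
  0 < sqrt x / sqrt B /\ sqrt x / sqrt B * B + x / (sqrt x / sqrt B) = 2 * sqrt x * sqrt B.
Proof.
  intros Hx HB. pose proof (sqrt_lt_R0 x Hx) as Ha. pose proof (sqrt_lt_R0 B HB) as Hb.
  split; [apply Rdiv_lt_0_compat; auto|].
  pose proof (sqrt_sqrt x ltac:(lra)) as Ex. pose proof (sqrt_sqrt B ltac:(lra)) as EB.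
  set (a := sqrt x) in *. set (b := sqrt B) in *. rewrite <- Ex, <- EB.
  field. split; apply Rgt_not_eq; assumption.
Qed.

Lemma Rpower_three_quarters x : 0 < x -> Rpower x (/ 2 + / 4) = sqrt x * sqrt (sqrt x).
Proof.
  intros Hx. rewrite Rpower_plus, Rpower_sqrt by exact Hx. f_equal.
  rewrite <- (Rpower_sqrt (sqrt x)) by (apply sqrt_lt_R0, Hx).
  rewrite <- (Rpower_sqrt x) by exact Hx. rewrite Rpower_mult. f_equal; field.
Qed.

Lemma three_quarters_le_regret_exponent C W : (1 <= C * W)%nat -> / 2 + / 4 <= regret_exponent C W.
Proof.
  intros HCW. unfold regret_exponent.
  assert (Hx : 1 <= INR (C * W)) by (apply (le_INR 1), HCW).
  assert (/ 2 <= INR (C * W) / (INR (C * W) + 1)).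
  { apply Rmult_le_reg_r with (INR (C * W) + 1); [lra|].
    unfold Rdiv. rewrite Rmult_assoc, Rinv_l by lra. lra. }
  lra.
Qed.

(* [6] absorbs the Hedge term [2 B^(3/2) sqrt (ln n)] with [B <= 2 sqrt T]; the
   second summand absorbs the blocking term [1 + 2 B C W], using [ln n >= ln 2]. *)
Definition regret_constant (C W : nat) : R := 6 + (1 + 4 * INR C * INR W) / sqrt (ln 2).

Lemma regret_constant_ge0 C W : 0 <= regret_constant C W.
Proof.
  unfold regret_constant. pose proof (pos_INR C). pose proof (pos_INR W).
  assert (0 <= (1 + 4 * INR C * INR W) / sqrt (ln 2)).
  { apply Rmult_le_pos; [nra|]. apply Rlt_le, Rinv_0_lt_compat, sqrt_lt_R0, ln2_gt0. }
  lra.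
Qed.

Lemma hedging_bound_le T n C W : (1 <= T)%nat -> (2 <= n)%nat -> (1 <= C * W)%nat ->
  let B := INR (S (Nat.sqrt T)) in
  let eps := sqrt (ln (INR n)) / sqrt B in
  B * (eps * B + ln (INR n) / eps) + 1 + B * (2 * INR C * INR W)
  <= regret_constant C W * Rpower (INR T) (regret_exponent C W) * sqrt (ln (INR n)).
Proof.
  intros HT Hn HCW B eps.
  assert (Hln : ln 2 <= ln (INR n)) by (apply ln_le; [lra|apply (le_INR 2), Hn]).
  pose proof ln2_gt0.
  destruct (block_size_spec T HT) as [_ HBs]. fold B in HBs.
  assert (HB1 : 1 <= B) by (apply (le_INR 1); lia).
  unfold eps. destruct (hedge_tuning (ln (INR n)) B ltac:(lra) ltac:(lra)) as [_ ->].
  set (s := sqrt (INR T)) in *. set (r := sqrt s). set (y := sqrt (ln (INR n))). set (z := sqrt B).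
  assert (HT1 : 1 <= INR T) by (apply (le_INR 1), HT).
  assert (Hs1 : 1 <= s) by (unfold s; rewrite <- sqrt_1; apply sqrt_le_1_alt, HT1).
  assert (Hr1 : 1 <= r) by (unfold r; rewrite <- sqrt_1; apply sqrt_le_1_alt, Hs1).
  assert (Hrr : r * r = s) by (apply sqrt_sqrt; lra).
  assert (Hzz : z * z = B) by (apply sqrt_sqrt; lra).
  assert (Hz0 : 0 < z) by (apply sqrt_lt_R0; lra).
  assert (Hy2 : 0 < sqrt (ln 2)) by (apply sqrt_lt_R0; lra).
  assert (Hy : sqrt (ln 2) <= y) by (apply sqrt_le_1_alt, Hln).
  assert (Hz : z <= 3 / 2 * r).
  { destruct (Rle_or_lt z (3 / 2 * r)) as [|Hgt]; [assumption|exfalso].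
    assert (3 / 2 * r * (3 / 2 * r) < z * z) by (apply Rmult_le_0_lt_compat; lra).
    nra. }
  assert (Hpow : s * r <= Rpower (INR T) (regret_exponent C W)).
  { assert (E : Rpower (INR T) (/ 2 + / 4) = s * r) by (apply Rpower_three_quarters; lra).
    rewrite <- E.
    apply Rle_Rpower; [exact HT1|apply three_quarters_le_regret_exponent, HCW]. }
  assert (HCW1 : 1 <= INR C * INR W) by (rewrite <- mult_INR; apply (le_INR 1), HCW).
  assert (Hhedge : B * (2 * y * z) <= 6 * (s * r) * y).
  { assert (B * z <= 3 * (s * r))
      by (apply Rle_trans with ((2 * s) * (3 / 2 * r)); [apply Rmult_le_compat|]; lra).
    nra. }
  assert (Hblock : 1 + B * (2 * INR C * INR W)
                   <= (1 + 4 * INR C * INR W) / sqrt (ln 2) * (s * r) * y).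
  { assert (Hsr : 1 <= s * r) by nra.
    assert (B * (INR C * INR W) <= 2 * s * (INR C * INR W)) by (apply Rmult_le_compat_r; lra).
    assert (s * (INR C * INR W) <= s * r * (INR C * INR W))
      by (apply Rmult_le_compat_r; [lra|]; nra).
    assert (Hratio : 1 <= y / sqrt (ln 2)).
    { apply Rmult_le_reg_r with (sqrt (ln 2)); [exact Hy2|].
      unfold Rdiv. rewrite Rmult_assoc, Rinv_l, Rmult_1_l, Rmult_1_r by lra. exact Hy. }
    replace ((1 + 4 * INR C * INR W) / sqrt (ln 2) * (s * r) * y)
      with ((1 + 4 * INR C * INR W) * (s * r) * (y / sqrt (ln 2))) by (field; lra).
    apply Rle_trans with ((1 + 4 * INR C * INR W) * (s * r) * 1); [nra|].
    apply Rmult_le_compat_l; [nra|exact Hratio]. }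
  apply Rle_trans with (regret_constant C W * (s * r) * y).
  - unfold regret_constant. nra.
  - pose proof (regret_constant_ge0 C W). pose proof (sqrt_pos (ln (INR n))).
    apply Rmult_le_compat_r; [lra|]. apply Rmult_le_compat_l; lra.
Qed.

Definition regret_guarantee (N W : nat) (c : nat -> nat) (Gamma : list policy) (T : nat)
    (bound : R) (M : rand_mech) : Prop :=
  is_distribution M /\
  (forall js, length js = T -> valid_instance N W js ->
     Forall (fun wp => feasible_run N W c (snd wp) js) M) /\
  (forall js, length js = T -> valid_instance N W js ->
     forall g, In g Gamma ->
       revenue N c (policy_pricer W g) js - expected_revenue N c M js <= bound).

Lemma valid_instance_StronglySorted N W js : valid_instance N W js ->
  StronglySorted (fun x y => (ja x <= ja y)%nat) js.
Proof. intros [_ Hs]. apply Sorted_StronglySorted; [intros x y z; lia|exact Hs]. Qed.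

Lemma hedging_mech_guarantee N C W c Gamma g0 T :
  capacities_le N C c ->
  Forall (feasible_policy C W) Gamma -> In g0 Gamma ->
  (2 <= length Gamma)%nat -> (1 <= T)%nat -> (1 <= C * W)%nat ->
  let B := S (Nat.sqrt T) in
  let eps := sqrt (ln (INR (length Gamma))) / sqrt (INR B) in
  regret_guarantee N W c Gamma T
    (regret_constant C W * Rpower (INR T) (regret_exponent C W)
       * sqrt (ln (INR (length Gamma))))
    (hedging_mech N W c Gamma g0 B eps).
Proof.
  intros Hc HGamma Hg0 Hn HT HCW B eps.
  assert (HB : (1 <= B)%nat) by (unfold B; lia).
  assert (Heps : 0 < eps).
  { apply hedge_tuning; [|apply (lt_INR 0); lia].
    rewrite <- ln_1. apply ln_increasing; [lra|apply (lt_INR 1); lia]. }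
  split; [|split].
  - apply uniform_mech_distribution. destruct Gamma; simpl in *; nia.
  - intros js _ _. apply Forall_forall. intros wp Hwp.
    apply in_map_iff in Hwp as (u & <- & _). eapply seed_pricer_feasible; eauto.
  - intros js Hlen Hjs g Hg. destruct (In_nth Gamma g g0 Hg) as (j & Hj & <-).
    eapply Rle_trans; [apply (hedging_regret_le N C W c Gamma g0 B eps); auto|].
    + destruct Hjs as [Hvalid _]. rewrite Forall_forall in Hvalid. exact Hvalid.
    + apply (valid_instance_StronglySorted N W), Hjs.
    + rewrite Hlen. apply block_size_spec, HT.
    + apply hedging_bound_le; assumption.
Qed.

Lemma single_policy_guarantee N C W c Gamma g0 T bound :
  capacities_le N C c ->
  Forall (feasible_policy C W) Gamma -> In g0 Gamma -> 0 <= bound ->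
  (length Gamma = 1 \/ T = 0 \/ C * W = 0)%nat ->
  regret_guarantee N W c Gamma T bound [(1, policy_pricer W g0)].
Proof.
  intros Hc HGamma Hg0 Hbound Hdeg. rewrite Forall_forall in HGamma.
  split; [|split].
  - split; [repeat constructor; simpl; lra|simpl; lra].
  - intros js _ _. repeat constructor.
    apply (policy_run_feasible N C W c); auto using below_cap_cap.
  - intros js Hlen [Hvalid _] g Hg. rewrite Forall_forall in Hvalid.
    unfold expected_revenue, revenue; simpl. rewrite !revenue_aux_policy_pricer.
    enough (policy_revenue W g (cap N c) js <= policy_revenue W g0 (cap N c) js) by lra.
    destruct Hdeg as [Hone|[HT|HCW]].
    + destruct Gamma as [|g1 [|]]; simpl in *; try lia.
      destruct Hg as [Hg|[]]; destruct Hg0 as [Hg0|[]]; subst; lra.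
    + destruct js; [simpl; lra|simpl in Hlen; lia].
    + pose proof (policy_revenue_no_bandwidth N C W c g (cap N c) js HCW Hc (HGamma g Hg) Hvalid
                    (below_cap_cap N c)).
      pose proof (policy_revenue_bounds N C W c g0 (cap N c) js Hc (HGamma g0 Hg0) Hvalid
                    (below_cap_cap N c)).
      lra.
Qed.

Theorem corollary1 :
  forall (C W : nat), exists K : R,
  forall (N : nat) (c : nat -> nat) (Gamma : list policy) (T : nat),
    (forall i, (1 <= i <= N)%nat -> (c i <= C)%nat) ->
    Gamma <> nil -> NoDup Gamma ->
    Forall (feasible_policy C W) Gamma ->
    exists M : rand_mech,
      is_distribution M /\
      (forall js, length js = T -> valid_instance N W js ->
         Forall (fun wp => feasible_run N W c (snd wp) js) M) /\
      (forall js, length js = T -> valid_instance N W js ->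
         forall g, In g Gamma ->
           revenue N c (policy_pricer W g) js - expected_revenue N c M js
           <= K * Rpower (INR T) (regret_exponent C W)
                * sqrt (ln (INR (length Gamma)))).
Proof.
  intros C W. exists (regret_constant C W). intros N c Gamma T Hc Hne _ HGamma.
  destruct Gamma as [|g0 Gamma']; [congruence|].
  assert (Hg0 : In g0 (g0 :: Gamma')) by (left; reflexivity).
  assert (Hregime : (2 <= length (g0 :: Gamma') /\ 1 <= T /\ 1 <= C * W)%nat
                    \/ (length (g0 :: Gamma') = 1 \/ T = 0 \/ C * W = 0)%nat)
    by (simpl; lia).
  destruct Hregime as [(Hn & HT & HCW)|Hdegenerate].
  - eexists. exact (hedging_mech_guarantee N C W c _ g0 T Hc HGamma Hg0 Hn HT HCW).
  - eexists. apply (single_policy_guarantee N C W c _ g0); auto.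
    apply Rmult_le_pos; [apply Rmult_le_pos|apply sqrt_pos].
    + apply regret_constant_ge0.
    + apply Rlt_le, exp_pos.
Qed.
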